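(* Consider problem (P): minimize $F(\mathbf{x})=\mathbf{A}\otimes\mathbf{x}$ over $\mathbf{x}\in\mathcal{X}$, under the standing assumptions stated in the context. If (P) is solvable, then: (i) every entry $b_i$ ($i=1,\dots,m$) of the vector $\mathbf{b}$ defined in the context is a real number (i.e. $b_i\neq-\infty$); (ii) every entry $x^*_j(\mathbf{A},\mathbf{b})$ ($j=1,\dots,n$) of the vector $\mathbf{x}^*(\mathbf{A},\mathbf{b})$ defined in the context is a real number (i.e. neither $-\infty$ nor $+\infty$).
   Context: Max-plus algebra: $\mathbb{R}_{\max}=\mathbb{R}\cup\{-\infty\}$ with $a\oplus b=\max\{a,b\}$ and $a\otimes b=a+b$; $\varepsilon=-\infty$. For $\mathbf{A}=(a_{ij})\in\mathbb{R}_{\max}^{m\times n}$ and $\mathbf{x}=(x_j)\in\mathbb{R}^n$, $\mathbf{A}\otimes\mathbf{x}$ is the vector with $i$th component $F_i(\mathbf{x})=\max_{1\le j\le n}(a_{ij}+x_j)$, with $r+(-\infty)=-\infty$. Vectors are compared componentwise. Problem (P): given $\mathbf{A}=(a_{ij})\in\mathbb{R}_{\max}^{m\times n}$, reals $k_1,\dots,k_n\ge 0$ not all zero, and $c\in\mathbb{R}$, let $\mathcal{X}=\{\mathbf{x}\in\mathbb{R}^n : \sum_{j=1}^n k_jx_j=c\}$ and $F(\mathbf{x})=\mathbf{A}\otimes\mathbf{x}$. A point $\tilde{\mathbf{x}}\in\mathcal{X}$ is a globally optimal solution of (P) if $F(\mathbf{x})\ge F(\tilde{\mathbf{x}})$ componentwise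 for every $\mathbf{x}\in\mathcal{X}$; (P) is solvable if a globally optimal solution exists. Standing assumptions: (1) no row of $\mathbf{A}$ consists entirely of $-\infty$ entries; (2) if the $j$th column of $\mathbf{A}$ consists entirely of $-\infty$ entries, then $k_j>0$. Let $\mathcal{J}=\{j : k_j>0\}$. Define $\mathbf{b}=(b_i)$ by $b_i=-\infty$ if $a_{ij}=-\infty$ for some $j\in\mathcal{J}$, and otherwise $b_i=\frac{\sum_{j\in\mathcal{J}}k_ja_{ij}+c}{\sum_{j\in\mathcal{J}}k_j}$. Define $\mathbf{x}^*(\mathbf{A},\mathbf{b})=(x^*_j(\mathbf{A},\mathbf{b}))$ by $x^*_j(\mathbf{A},\mathbf{b})=\min_{1\le i\le m}(b_i-a_{ij})$, with the conventions, for $r\in\mathbb{R}$: $r-(-\infty)=+\infty$, $(-\infty)-r=-\infty$, $(-\infty)-(-\infty)=+\infty$; thus $x^*_j(\mathbf{A},\mathbf{b})\in\mathbb{R}\cup\{-\infty,+\infty\}$. *)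

(* Max-plus algebra R_max = R ∪ {-oo}, represented as
   [option R] with [None] standing for epsilon = -oo. *)
From mathcomp Require Import all_boot all_order all_algebra.
Set Implicit Arguments. Unset Strict Implicit. Unset Printing Implicit Defensive.
Import Order.TTheory GRing.Theory Num.Theory.
Local Open Scope ring_scope.

Section MaxPlus.
Variable R : realFieldType.

Definition rmax := option R.

Definition rmax_add (a b : rmax) : rmax :=
  match a, b with
  | None, _ => b
  | _, None => a
  | Some x, Some y => Some (Num.max x y)
  end.

Definition rmax_mulr (a : rmax) (r : R) : rmax :=
  match a with None => None | Some x => Some (x + r) end.

Definition rmax_le (a b : rmax) : Prop :=
  match a, b with
  | None, _ => True
  | Some _, None => False
  | Some x, Some y => x <= y
  end.

Definition mp_apply m n (A : 'I_m -> 'I_n -> rmax) (x : 'I_n -> R) (i : 'I_m)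
  : rmax := \big[rmax_add/None]_(j < n) rmax_mulr (A i j) (x j).

Definition feasible n (k : 'I_n -> R) (c : R) (x : 'I_n -> R) : Prop :=
  \sum_(j < n) k j * x j = c.

Definition glob_opt m n (A : 'I_m -> 'I_n -> rmax) (k : 'I_n -> R) (c : R)
  (xt : 'I_n -> R) : Prop :=
  feasible k c xt /\
  forall x, feasible k c x -> forall i, rmax_le (mp_apply A xt i) (mp_apply A x i).

Definition solvable m n (A : 'I_m -> 'I_n -> rmax) (k : 'I_n -> R) (c : R) : Prop :=
  exists xt, glob_opt A k c xt.

Definition bvec m n (A : 'I_m -> 'I_n -> rmax) (k : 'I_n -> R) (c : R)
  (i : 'I_m) : rmax :=
  if [exists j : 'I_n, (0 < k j) && (A i j == None)] then None
  else Some ((\sum_(j < n | 0 < k j) k j * odflt 0 (A i j) + c)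
             / \sum_(j < n | 0 < k j) k j).

Inductive xval := XNinf | XFin of R | XPinf.

Definition rmax_sub (b a : rmax) : xval :=
  match b, a with
  | Some r, Some s => XFin (r - s)
  | Some _, None => XPinf
  | None, Some _ => XNinf
  | None, None => XPinf
  end.

Definition xval_min (u v : xval) : xval :=
  match u, v with
  | XNinf, _ => XNinf
  | _, XNinf => XNinf
  | XPinf, _ => v
  | _, XPinf => u
  | XFin r, XFin s => XFin (Num.min r s)
  end.

Definition xstar m n (A : 'I_m -> 'I_n -> rmax) (b : 'I_m -> rmax) (j : 'I_n)
  : xval := \big[xval_min/XPinf]_(i < m) rmax_sub (b i) (A i j).

End MaxPlus.

From mathcomp Require Import all_boot all_order all_algebra.
Import Order.TTheory GRing.Theory Num.Theory.
Local Open Scope ring_scope.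
Set Implicit Arguments.
Unset Strict Implicit.

(* The heart of the argument is a perturbation of an optimal
   solution: if k_{j0} > 0 but some entry a_{i j0} is -oo, lower every
   coordinate of the optimum x~ by 1 and raise x_{j0} enough to stay on the
   hyperplane sum_j k_j x_j = c.  Since a_{i j0} = -oo, the i-th component
   F_i only sees the lowered coordinates, so it drops by exactly 1; it is
   finite because row i has a finite entry, contradicting optimality.  Hence
   every column j with k_j > 0 is free of -oo entries, which is claim (i).
   Every column has a finite entry (either directly, or k_j > 0 by the
   standing assumptions and the above applies), so each minimum defining
   x*_j involves only terms b_i - a_{ij} in R ∪ {+oo}, at least one of them
   real; this gives claim (ii). *)

Section MaxPlus.
Variable R : realFieldType.

Lemma rmax_mulr_add (u v : rmax R) (d : R) :
  rmax_mulr (rmax_add u v) d = rmax_add (rmax_mulr u d) (rmax_mulr v d).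
Proof.
case: u v => [x|] [y|] //=.
by rewrite !maxEle lerD2r; case: ifP.
Qed.

Lemma big_rmax_add_None (I : eqType) (r : seq I) (F : I -> rmax R) :
  \big[@rmax_add R/None]_(i <- r) F i = None -> {in r, forall i, F i = None}.
Proof.
elim: r => [|a r IH] //; rewrite big_cons => Hsum i.
have [Ha Hr] : F a = None /\ \big[@rmax_add R/None]_(j <- r) F j = None.
  by move: Hsum; case: (F a) => [x|]; case: (\big[_/_]_(j <- r) F j).
by rewrite in_cons => /orP[/eqP -> //|]; apply: IH.
Qed.

Lemma big_xval_min_Pinf (I : eqType) (r : seq I) (F : I -> xval R) :
  \big[@xval_min R/XPinf R]_(i <- r) F i = XPinf R ->
  {in r, forall i, F i = XPinf R}.
Proof.
elim: r => [|a r IH] //; rewrite big_cons => Hmin i.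
have [Ha Hr] : F a = XPinf R /\ \big[@xval_min R/XPinf R]_(j <- r) F j = XPinf R.
  by move: Hmin; case: (F a) => [|x|]; case: (\big[_/_]_(j <- r) F j).
by rewrite in_cons => /orP[/eqP -> //|]; apply: IH.
Qed.

Lemma big_xval_min_Ninf (I : Type) (r : seq I) (F : I -> xval R) :
  (forall i, F i <> XNinf R) -> \big[@xval_min R/XPinf R]_(i <- r) F i <> XNinf R.
Proof.
move=> HF; elim: r => [|a r IH]; first by rewrite big_nil.
rewrite big_cons.
by move: (HF a) IH; case: (F a) => [|x|]; case: (\big[_/_]_(j <- r) F j).
Qed.

Variables (m n : nat) (A : 'I_m -> 'I_n -> rmax R).

Lemma mp_apply_finite (x : 'I_n -> R) i :
  (exists j, A i j != None) -> exists r, mp_apply A x i = Some r.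
Proof.
case=> j HAij; case E: (mp_apply A x i) => [r|]; first by exists r.
move: HAij; have := big_rmax_add_None E (mem_index_enum j).
by case: (A i j).
Qed.

Lemma mp_apply_translate (x : 'I_n -> R) (d : R) i :
  mp_apply A (fun j => x j + d) i = rmax_mulr (mp_apply A x i) d.
Proof.
rewrite /mp_apply (big_morph (fun u => rmax_mulr u d) (fun u v => rmax_mulr_add u v d) erefl).
by apply: eq_bigr => j _; case: (A i j) => //= a; rewrite addrA.
Qed.

Lemma mp_apply_support (x y : 'I_n -> R) i :
  (forall j, A i j != None -> x j = y j) -> mp_apply A x i = mp_apply A y i.
Proof.
move=> Hxy; apply: eq_bigr => j _ /=.
by case E: (A i j) => [a|] //=; rewrite Hxy ?E.
Qed.

Variables (k : 'I_n -> R) (c : R).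

Definition perturb (x : 'I_n -> R) (j0 : 'I_n) (l : 'I_n) : R :=
  x l - 1 + (if l == j0 then (\sum_j k j) / k j0 else 0).

Lemma perturb_feasible x j0 :
  0 < k j0 -> feasible k c x -> feasible k c (perturb x j0).
Proof.
move=> Hk Hx; rewrite /feasible /perturb.
under eq_bigr do rewrite mulrDr mulrBr mulr1.
rewrite big_split sumrB /= Hx [X in _ + X](bigD1 j0) //= eqxx.
rewrite [X in _ + (_ + X)]big1 => [|l Hl]; last by rewrite (negbTE Hl) mulr0.
by rewrite addr0 mulrCA divff ?mulr1 ?gt_eqF // subrK.
Qed.

Lemma solvable_column_finite i j0 :
  solvable A k c -> (exists j, A i j != None) -> 0 < k j0 -> A i j0 != None.
Proof.
case=> xt [Hfeas Hopt] Hrow Hk; apply/negP => /eqP HAij0.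
have Hdrop : mp_apply A (perturb xt j0) i = rmax_mulr (mp_apply A xt i) (-1).
  rewrite -mp_apply_translate; apply: mp_apply_support => j HAij.
  rewrite /perturb; case: eqP => [Ej | _]; last by rewrite addr0.
  by move: HAij; rewrite Ej HAij0.
have := Hopt _ (perturb_feasible Hk Hfeas) i; rewrite Hdrop.
have [r ->] := mp_apply_finite xt Hrow => /=.
by rewrite -subr_ge0 addrAC subrr add0r oppr_ge0 ler10.
Qed.

End MaxPlus.

Theorem lemma2 (R : realFieldType) (m n : nat) (A : 'I_m -> 'I_n -> rmax R)
  (k : 'I_n -> R) (c : R)
  (Hm : (0 < m)%N)
  (Hk0 : forall j, 0 <= k j)
  (Hknz : exists j, k j != 0)
  (Hrow : forall i, exists j, A i j != None)
  (Hcol : forall j, (forall i, A i j = None) -> 0 < k j)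
  (Hsolv : solvable A k c) :
  (forall i, exists r : R, bvec A k c i = Some r) /\
  (forall j, exists r : R, xstar A (bvec A k c) j = XFin r).
Proof.
have Hb i : exists r : R, bvec A k c i = Some r.
  rewrite /bvec; case: existsP => [[j /andP[Hk /eqP HAij]]|_]; last by eexists.
  by move: (solvable_column_finite Hsolv (Hrow i) Hk); rewrite HAij.
have Hcolfin j : exists i, A i j != None.
  apply/existsP; apply: contraT; rewrite negb_exists => /forallP Hnone.
  have HAj i : A i j = None by apply/eqP; rewrite -[_ == _]negbK Hnone.
  have i0 : 'I_m := Ordinal Hm.
  by move: (solvable_column_finite Hsolv (Hrow i0) (Hcol j HAj)); rewrite HAj.
split=> // j.
have Hfin : xstar A (bvec A k c) j <> XNinf R.
  by apply: big_xval_min_Ninf => i; have [r ->] := Hb i; case: (A i j).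
have Hreal : xstar A (bvec A k c) j <> XPinf R.
  case: (Hcolfin j) => i HAij /big_xval_min_Pinf /(_ i (mem_index_enum i)).
  by have [r ->] := Hb i; move: HAij; case: (A i j).
by move: Hfin Hreal; case: (xstar A (bvec A k c) j) => // r _ _; exists r.
Qed.
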